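(* Let $a,b,v$ be integers with $b>a\ge2$ and $v\ge2$, let $u=2$, and set $X:=ab-a-b$. Then $a,b,u,v$ satisfy (1) $a$, $b$ and $2v-1$ are pairwise coprime; (2) $\frac{1}{a}+\frac{1}{b}+\frac{v}{2v-1}>1$; (3) $vab-1=(2v-1)X$, if and only if the triple $(a,b,2v-1)$ is one of $(3,14,5)$, $(3,10,7)$, $(3,8,11)$, $(3,7,19)$, $(4,11,3)$, $(4,5,9)$, $(5,7,3)$. *)

From mathcomp Require Import all_boot all_order all_algebra.
Set Implicit Arguments. Unset Strict Implicit. Unset Printing Implicit Defensive.
Import Order.TTheory GRing.Theory Num.Theory.

(* Only condition (3) matters: the triples it allows satisfy (1) and (2) by
   inspection.  Written as (v-1)ab + 1 = (2v-1)(a+b) < 2(2v-1)b, it gives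
   (v-1)a < 2(2v-1), hence a <= 5, while a = 2 would force b = 3 - 4v < 0.
   Multiplying (3) by a - 2 factors it as
     ((a-2)v - (a-1)) ((a-2)b - 2a) = a^2 - a + 2,
   so for a = 3, 4, 5 the first factor is a positive divisor of 8, 14, 22. *)

From mathcomp Require Import all_boot all_order all_algebra.
From mathcomp Require Import zify ring.
Set Implicit Arguments. Unset Strict Implicit. Unset Printing Implicit Defensive.
Import Order.TTheory GRing.Theory Num.Theory.
Local Open Scope ring_scope.

Definition solution_triples : seq (int * int * int) :=
  [:: (3, 14, 5); (3, 10, 7); (3, 8, 11); (3, 7, 19);
      (4, 11, 3); (4, 5, 9); (5, 7, 3)].

Definition admissible (a b v : int) : Prop :=
  [/\ coprimez a b, coprimez a (2 * v - 1) & coprimez b (2 * v - 1)] /\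
  (1 / a%:~R + 1 / b%:~R + v%:~R / (2 * v - 1)%:~R > 1 :> rat) /\
  v * a * b - 1 = (2 * v - 1) * (a * b - a - b).

Lemma mulz_eq_divisors (x y : int) (n : nat) :
  (0 < n)%N -> 0 < x -> x * y = n%:Z ->
  exists2 d, d \in divisors n & x = d%:Z /\ y = (n %/ d)%N.
Proof.
move=> n_gt0 x_gt0 xy.
have y_ge0 : 0 <= y by rewrite -(pmulr_rge0 _ x_gt0) xy.
case: x x_gt0 xy => // m m_gt0; case: y y_ge0 => // k _.
move/eqP; rewrite -PoszM eqz_nat => /eqP mk.
exists m; last by rewrite -mk mulKn.
by rewrite -dvdn_divisors // -mk dvdn_mulr.
Qed.

Lemma eq3_factored (a b v : int) :
  v * a * b - 1 = (2 * v - 1) * (a * b - a - b) ->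
  ((a - 2) * v - (a - 1)) * ((a - 2) * b - 2 * a) = a ^+ 2 - a + 2.
Proof.
move=> e; apply/eqP; rewrite -subr_eq0.
have -> : ((a - 2) * v - (a - 1)) * ((a - 2) * b - 2 * a) - (a ^+ 2 - a + 2)
    = (a - 2) * ((2 * v - 1) * (a * b - a - b) - (v * a * b - 1)) by ring.
by rewrite e subrr mulr0.
Qed.

Lemma eq3_a_bounds (a b v : int) : 2 <= a < b -> 2 <= v ->
  v * a * b - 1 = (2 * v - 1) * (a * b - a - b) -> 3 <= a <= 5.
Proof.
move=> /andP[a_ge2 a_lt_b] v_ge2 e.
have e_sum : (v - 1) * a * b + 1 = (2 * v - 1) * (a + b) by lia.
apply/andP; split.
- suff : a != 2 by lia.
  by apply/eqP=> a2; subst a; nia.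
- have : (v - 1) * a * b < 2 * (2 * v - 1) * b by nia.
  have : (v - 1) * a < 2 * (2 * v - 1) by nia.
  nia.
Qed.

Lemma eq3_solutions (a b v : int) : 2 <= a < b -> 2 <= v ->
  v * a * b - 1 = (2 * v - 1) * (a * b - a - b) ->
  (a, b, 2 * v - 1) \in solution_triples.
Proof.
move=> a_range v_ge2 e.
have /andP[a_ge3 a_le5] := eq3_a_bounds a_range v_ge2 e.
have x_gt0 : 0 < (a - 2) * v - (a - 1) by nia.
have : a = 3 \/ a = 4 \/ a = 5 by lia.
case=> [|[|]] a_val; subst a.
- have [d] := mulz_eq_divisors (n := 8) isT x_gt0 (eq3_factored e).
  rewrite (_ : divisors 8 = [:: 1; 2; 4; 8]%N) //.
  by rewrite !inE !xpair_eqE => /or4P[]/eqP-> [ex ey]; lia.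
- have [d] := mulz_eq_divisors (n := 14) isT x_gt0 (eq3_factored e).
  rewrite (_ : divisors 14 = [:: 1; 2; 7; 14]%N) //.
  by rewrite !inE !xpair_eqE => /or4P[]/eqP-> [ex ey]; lia.
- have [d] := mulz_eq_divisors (n := 22) isT x_gt0 (eq3_factored e).
  rewrite (_ : divisors 22 = [:: 1; 2; 11; 22]%N) //.
  by rewrite !inE !xpair_eqE => /or4P[]/eqP-> [ex ey]; lia.
Qed.

Lemma solution_triples_admissible (a b v : int) :
  (a, b, 2 * v - 1) \in solution_triples -> admissible a b v.
Proof.
(* Express v through c := 2v - 1, so that each listed triple is a closed computation. *)
rewrite [admissible _ _ _](_ : _ = admissible a b ((2 * v - 1 + 1) %/ 2)%Z); last first.
  by rewrite subrK mulKz.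
move: (2 * v - 1) => c; rewrite !inE !xpair_eqE.
move=> /orP[|/orP[|/orP[|/orP[|/orP[|/orP[|]]]]]] /andP[/andP[/eqP-> /eqP->] /eqP->].
all: by vm_compute; do !split.
Qed.

Theorem lemma3p6 (a b v : int) (hab : a < b) (ha : 2 <= a) (hv : 2 <= v) :
  [/\ coprimez a b, coprimez a (2 * v - 1) & coprimez b (2 * v - 1)] /\
  (1 / a%:~R + 1 / b%:~R + v%:~R / (2 * v - 1)%:~R > 1 :> rat) /\
  v * a * b - 1 = (2 * v - 1) * (a * b - a - b)
  <->
  (a, b, 2 * v - 1) \in
    [:: (3, 14, 5); (3, 10, 7); (3, 8, 11); (3, 7, 19);
        (4, 11, 3); (4, 5, 9); (5, 7, 3)].
Proof.
split=> [[_ [_ e]] | /solution_triples_admissible //].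
by apply: eq3_solutions hv e; rewrite ha hab.
Qed.
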